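(* Let $G$ be a non-complete double-critical $k$-chromatic graph. If $H$ is a connected subgraph of $G$ with at least $2$ vertices, then the graph $G/V(H)$ obtained from $G$ by contracting $V(H)$ into a single vertex is $(k-1)$-colourable.
   Context: All graphs are finite and simple. A graph $G$ is (vertex-)critical if $\chi(G-v)<\chi(G)$ for every vertex $v\in V(G)$. A critical graph $G$ is double-critical if $\chi(G-x-y)\le\chi(G)-2$ for every edge $xy\in E(G)$. For $U\subseteq V(G)$ with $G[U]$ connected, $G/U$ denotes the graph obtained from $G$ by contracting $U$ into one vertex (resulting in a simple graph). *)

From mathcomp Require Import all_boot.
Set Implicit Arguments. Unset Strict Implicit. Unset Printing Implicit Defensive.

Definition simple_graph (T : finType) (e : rel T) : Prop :=
  symmetric e /\ irreflexive e.

Definition colourable (T : finType) (e : rel T) (S : {set T}) (k : nat) : bool :=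
  [exists f : {ffun T -> 'I_k},
     [forall x in S, forall y in S, e x y ==> (f x != f y)]].

(* chromatic number of G[S]: least k such that G[S] is k-colourable
   (G[S] is always #|S|-colourable, so the default #|S| is never spurious) *)
Definition chi (T : finType) (e : rel T) (S : {set T}) : nat :=
  \big[minn/#|S|]_(k < #|S|.+1 | colourable e S k) (k : nat).

Definition critical (T : finType) (e : rel T) : Prop :=
  forall v : T, chi e ([set: T] :\ v) < chi e [set: T].

Definition double_critical (T : finType) (e : rel T) : Prop :=
  critical e /\
  forall x y : T, e x y -> chi e ([set: T] :\ x :\ y) <= chi e [set: T] - 2.

Definition complete (T : finType) (e : rel T) : Prop :=
  forall x y : T, x != y -> e x y.

Definition subgraph (T : finType) (e : rel T) (U : {set T}) (h : rel T) : Prop :=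
  forall x y, h x y -> [/\ e x y, x \in U & y \in U].

Definition connected_graph (T : finType) (U : {set T}) (h : rel T) : Prop :=
  forall x y, x \in U -> y \in U ->
    connect [rel a b | [&& h a b, a \in U & b \in U]] x y.

(* G/U : vertices are None (the contracted vertex) and Some x for x \notin U. *)
Definition contract_vertices (T : finType) (U : {set T}) : {set option T} :=
  None |: [set Some x | x in ~: U].

Definition contract_rel (T : finType) (e : rel T) (U : {set T}) : rel (option T) :=
  fun a b =>
    match a, b with
    | Some x, Some y => [&& e x y, x \notin U & y \notin U]
    | None, Some y => (y \notin U) && [exists u in U, e u y]
    | Some x, None => (x \notin U) && [exists u in U, e u x]
    | None, None => false
    end.

From mathcomp Require Import all_boot.
Set Implicit Arguments. Unset Strict Implicit. Unset Printing Implicit Defensive.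

(* The subgraph H contributes an edge xy of G inside V(H). By double-criticality
   G - x - y is (k-2)-colourable; no vertex of G - V(H) is x or y, so this
   colouring restricts to G - V(H), and giving the contracted vertex one fresh
   colour yields a (k-1)-colouring of G/V(H). *)

Section Colourings.

Variables (T : finType) (e : rel T).

(* Colourings with values in [nat] rather than ['I_n]: they exist even on the
   empty vertex set of a nonempty type, where [colourable e set0 0] fails. *)
Definition nat_colouring (S : {set T}) (n : nat) (f : T -> nat) : Prop :=
  {in S, forall x, f x < n} /\ {in S &, forall x y, e x y -> f x != f y}.

Lemma nat_colouring_subset (S S' : {set T}) n f :
  S' \subset S -> nat_colouring S n f -> nat_colouring S' n f.
Proof.
move=> /subsetP sS'S [lt_f prop_f]; split=> [x /sS'S|x y /sS'S xS /sS'S yS].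
  exact: lt_f.
exact: prop_f.
Qed.

Lemma nat_colouring_leq (S : {set T}) m n f :
  m <= n -> nat_colouring S m f -> nat_colouring S n f.
Proof. by move=> le_mn [lt_f prop_f]; split=> // x /lt_f /leq_trans->. Qed.

Hypothesis irr_e : irreflexive e.

Lemma nat_colouring_chi (S : {set T}) : exists f, nat_colouring S (chi e S) f.
Proof.
apply: (big_ind (fun n => exists f, nat_colouring S n f)).
- exists (index^~ (enum S)); split=> [x xS|x y xS yS].
    by rewrite cardE index_mem mem_enum.
  apply: contraTneq => /(index_inj x); rewrite !mem_enum => /(_ xS yS)->.
  by rewrite irr_e.
- move=> m n [f col_f] [g col_g].
  by case: (leqP m n) => _; [exists f | exists g].
move=> [i _] /= /existsP [f /forall_inP prop_f].
exists (fun x => val (f x)); split=> [x _|x y xS yS exy]; first exact: ltn_ord.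
by have /forall_inP/(_ y yS)/implyP := prop_f x xS; apply.
Qed.

Lemma chi_edge_ge2 (S : {set T}) x y :
  x \in S -> y \in S -> e x y -> 1 < chi e S.
Proof.
move=> xS yS exy.
apply: (big_ind (fun n => 1 < n)) => [|m n|[i _] /= /existsP [f /forall_inP prop_f]].
- by apply/card_gt1P; exists x, y; split=> //; apply: contraTneq exy => ->; rewrite irr_e.
- by rewrite leq_min => ->.
have /forall_inP/(_ y yS)/implyP/(_ exy) := prop_f x xS.
case: i f {prop_f} => [|[|i]] //= f; first by case: (f x).
by case: (f x) => [[|]] //; case: (f y) => [[|]].
Qed.

End Colourings.

Lemma subgraph_connected_edge (T : finType) (e : rel T) (U : {set T}) (h : rel T) :
  subgraph e U h -> connected_graph U h -> 1 < #|U| ->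
  exists x y, [/\ x \in U, y \in U & e x y].
Proof.
move=> sub_h conn_h /card_gt1P [a [b [aU bU neq_ab]]].
have /connectP [[|c p] /= path_p last_p] := conn_h a b aU bU.
  by rewrite last_p eqxx in neq_ab.
case/andP: path_p => /and3P [hac _ _] _.
by have [eac _ cU] := sub_h _ _ hac; exists a, c.
Qed.

Lemma colourable_contract (T : finType) (e : rel T) (U : {set T}) n f :
  nat_colouring e (~: U) n f ->
  colourable (contract_rel e U) (contract_vertices U) n.+1.
Proof.
move=> [lt_f prop_f].
have lt_fU z : z \notin U -> f z < n by move=> zU; apply: lt_f; rewrite inE.
pose c o := if o is Some z then f z else n.
have c_le o : o \in contract_vertices U -> c o < n.+1.
  by case: o => [z|] // /setU1P [//|/imsetP [z' + [->]]]; rewrite inE => /lt_fU /ltnW.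
apply/existsP; exists [ffun o => inord (c o)].
apply/forall_inP => a /c_le ca; apply/forall_inP => b /c_le cb; apply/implyP.
rewrite !ffunE -(inj_eq val_inj) /= !inordK //.
case: a b {ca cb} => [a|] [b|] //= => [/and3P [eab aU bU]|/andP [aU _]|/andP [bU _]].
- by rewrite prop_f // inE.
- by rewrite ltn_eqF ?lt_fU.
- by rewrite gtn_eqF ?lt_fU.
Qed.

Theorem proposition3 (T : finType) (e : rel T) (k : nat)
  (Hsimple : simple_graph e)
  (Hnc : ~ complete e)
  (Hdc : double_critical e)
  (Hk : chi e [set: T] = k)
  (U : {set T}) (h : rel T)
  (Hsub : subgraph e U h)
  (Hconn : connected_graph U h)
  (H2 : 2 <= #|U|) :
  colourable (contract_rel e U) (contract_vertices U) k.-1.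
Proof.
have [_ irr_e] := Hsimple.
have [x [y [xU yU exy]]] := subgraph_connected_edge Hsub Hconn H2.
have k_ge2 : 1 < k by rewrite -Hk (chi_edge_ge2 irr_e _ _ exy) ?inE.
have [f col_f] := nat_colouring_chi irr_e ([set: T] :\ x :\ y).
have chi_xy := Hdc.2 x y exy; rewrite Hk in chi_xy.
have U'_sub : ~: U \subset [set: T] :\ x :\ y.
  apply/subsetP => z; rewrite !inE andbT => zU.
  by apply/andP; split; apply: contraNneq zU => ->.
have := colourable_contract (nat_colouring_subset U'_sub (nat_colouring_leq chi_xy col_f)).
by rewrite subn2 prednK // -ltnS prednK // ltnW.
Qed.
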